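(* Let $a\in\mathbb C\setminus\{0\}$ and $b\in\mathbb C$. Then (a) $\{\widehat{\mathcal B}(a,b)_n:n\ge0\}$ is a generating set of the algebra $\mathsf{NSym}$; (b) $\{\mathrm{comm}(\widehat{\mathcal B}(a,b)_n):n\ge0\}$ is a generating set of the algebra $\mathsf{Sym}$.
   Context: $\mathsf{NSym}$ is the algebra of noncommutative symmetric functions over $\mathbb C$ (free associative on $H_1,H_2,\dots$, with $H_\beta=H_{\beta_1}\cdots H_{\beta_l}$), $\mathsf{Sym}$ the algebra of symmetric functions, and $\mathrm{comm}:\mathsf{NSym}\to\mathsf{Sym}$ the algebra homomorphism with $H_n\mapsto h_n$ (complete homogeneous symmetric function). $\widehat{\mathcal B}(a,b)_0=1$ and for $n\ge1$, $\widehat{\mathcal B}(a,b)_n=\sum_{\beta}a^{n-\ell(\beta)}b^{\ell(\beta)-1}H_\beta$, the sum over all compositions $\beta$ of $n$, with the convention $0^0=1$ ($\ell(\beta)$ the number of parts). *)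

From HB Require Import structures.
From mathcomp Require Import all_boot all_order all_algebra.
From mathcomp Require Import complex.
From mathcomp Require Import Rstruct.
From Stdlib Require Rdefinitions.
Set Implicit Arguments. Unset Strict Implicit. Unset Printing Implicit Defensive.
Import Order.TTheory GRing.Theory Num.Theory.
Local Open Scope ring_scope.

Notation C := (Rdefinitions.R)[i].

Definition is_comp (s : seq nat) : bool := all (fun k : nat => (0 < k)%N) s.

(* compsf fuel n : all compositions of n (fuel >= n suffices). *)
Fixpoint compsf (fuel n : nat) : seq (seq nat) :=
  if n == 0%N then [:: [::]] else
  match fuel with
  | 0 => [::]
  | f.+1 => flatten [seq [seq k :: c | c <- compsf f (n - k)] | k <- iota 1 n]
  end.
Definition comps (n : nat) : seq (seq nat) := compsf n n.

(* It is the free associative algebra on H_1, H_2, ..., i.e. the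
   algebra of the free monoid of words in positive integers: an element
   is a coefficient function on words beta, with H_beta the indicator of
   beta.  We use arbitrary coefficient functions seq nat -> C (the product
   below only ever involves finite sums) and single out NSym by the
   predicate [in_NSym]: finite support consisting of compositions.      *)
Definition nfun := seq nat -> C.

Definition in_NSym (f : nfun) : Prop :=
  exists d : nat, forall beta, f beta != 0 -> is_comp beta /\ (sumn beta <= d)%N.

Definition nmul (f g : nfun) : nfun :=
  fun beta => \sum_(i < (size beta).+1) f (take i beta) * g (drop i beta).
Definition none : nfun := fun beta => (beta == [::])%:R.
Definition nprod (fs : seq nfun) : nfun := foldr nmul none fs.

Definition Hn (n : nat) : nfun := fun beta => (beta == [:: n])%:R.

(* \hat B(a,b)_n = sum over compositions beta of n of a^(n-l) b^(l-1) H_beta,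
   and \hat B(a,b)_0 = 1.  (x ^+ 0 = 1, so 0^0 = 1.) *)
Definition Bhat (a b : C) (n : nat) : nfun :=
  if n == 0%N then none else
  fun beta => if beta \in comps n
              then a ^+ (n - size beta) * b ^+ (size beta).-1 else 0.

(* Formal power series in x_1, x_2, ...: coefficient functions on
   exponent vectors alpha : seq nat (alpha_i = exponent of x_(i+1); trailing
   zeros are irrelevant for the symmetric series considered).                            *)
Definition sfun := seq nat -> C.

(* alpha and alpha' describe the same multiset of nonzero exponents *)
Definition same_nonzero (al al' : seq nat) : bool :=
  perm_eq (al ++ nseq (size al') 0%N) (al' ++ nseq (size al) 0%N).

Definition in_Sym (f : sfun) : Prop :=
  (forall al al', same_nonzero al al' -> f al = f al') /\
  (exists d : nat, forall al, f al != 0 -> (sumn al <= d)%N).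

Fixpoint below (al : seq nat) : seq (seq nat) :=
  match al with
  | [::] => [:: [::]]
  | a :: t => flatten [seq [seq k :: s | s <- below t] | k <- iota 0 a.+1]
  end.
Fixpoint subv (al be : seq nat) : seq nat :=
  match al, be with
  | a :: t, b :: u => (a - b)%N :: subv t u
  | _, _ => al
  end.

Definition smul (f g : sfun) : sfun :=
  fun al => \sum_(be <- below al) f be * g (subv al be).
Definition sone : sfun := fun al => (sumn al == 0%N)%:R.
Definition sprod (fs : seq sfun) : sfun := foldr smul sone fs.

Definition hn (n : nat) : sfun := fun al => (sumn al == n)%:R.

(* comm : NSym -> Sym, the algebra map H_n |-> h_n, i.e. H_beta |-> h_beta.
   Since h_beta is homogeneous of degree |beta|, the coefficient of x^alpha
   in comm f = sum_beta f(beta) h_beta only involves compositions of |alpha|. *)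
Definition comm (f : nfun) : sfun :=
  fun al => \sum_(be <- comps (sumn al)) f be * sprod (map hn be) al.

From HB Require Import structures.
From mathcomp Require Import all_boot all_order all_algebra complex Rstruct.
From mathcomp Require Import zify.
Set Implicit Arguments. Unset Strict Implicit. Unset Printing Implicit Defensive.
Import Order.TTheory GRing.Theory Num.Theory.
Local Open Scope ring_scope.

(* (a) In NSym, \hat B(a,b)_n = a^(n-1) H_n + (a combination of H_beta whose parts
   are all < n), because (n) is the only composition of n with a part equal to n.
   Since a != 0, induction on n puts every H_n, hence every H_beta, in the
   subalgebra generated by the \hat B(a,b)_n, and the H_beta span NSym.
   (b) comm turns this into the same triangular relation between
   comm(\hat B(a,b)_n) and h_n, so every h_n is generated.  Newton's identity
   k h_k = sum_(1 <= i <= k) p_i h_(k-i) then generates the power sums p_k, and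
   p_mu = c m_mu + (monomial symmetric functions m_nu with fewer parts than mu)
   with c > 0, so induction on the number of parts generates every m_mu; the
   m_mu span Sym. *)

Lemma sum_mulr_eq_natr (R : pzSemiRingType) (T : eqType) (s : seq T)
    (F : T -> R) (x : T) :
  uniq s -> \sum_(y <- s) F y * (x == y)%:R = if x \in s then F x else 0.
Proof.
elim: s => [|y s IH] /=; first by rewrite big_nil.
case/andP=> ys us; rewrite big_cons IH // in_cons.
case: (eqVneq x y) => [->|nxy] /=; first by rewrite (negPf ys) mulr1 addr0.
by rewrite mulr0 add0r.
Qed.

Lemma sum_natr_pred_unique (R : pzSemiRingType) (T : eqType) (s : seq T)
    (x : T) (P : pred T) (F : T -> R) :
  uniq s -> x \in s -> P x -> {in s, forall y, P y -> y = x} ->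
  \sum_(y <- s) (P y)%:R * F y = F x.
Proof.
move=> us xs Px U; rewrite (bigD1_seq x) //= Px mul1r big1_seq ?addr0 //.
move=> y /andP[yx ys]; case: (boolP (P y)) => Py; last by rewrite mul0r.
by move: yx; rewrite (U y ys Py) eqxx.
Qed.

Lemma sum_iota_triangle (R : nmodType) (G : nat -> nat -> R) n :
  \sum_(i <- iota 0 n.+1) \sum_(j <- iota 0 i.+1) G j (i - j)%N =
  \sum_(j <- iota 0 n.+1) \sum_(k <- iota 0 (n - j).+1) G j k.
Proof.
change (\sum_(0 <= i < n.+1) \sum_(0 <= j < i.+1) G j (i - j)%N =
        \sum_(0 <= j < n.+1) \sum_(0 <= k < (n - j).+1) G j k).
elim: n => [|n IH]; first by rewrite !big_nat1.
rewrite big_nat_recr //= IH [RHS]big_nat_recr //= subnn big_nat1.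
rewrite (big_nat_recr (n.+1)) //= subnn addrA; congr (_ + _).
rewrite -big_split /=; apply: eq_big_nat => j /andP[_ jn].
by rewrite subSn // [RHS]big_nat_recr.
Qed.

Lemma uniq_flatten_cons (T : eqType) (s : seq T) (L : T -> seq (seq T)) :
  uniq s -> (forall k, uniq (L k)) ->
  uniq (flatten [seq [seq k :: c | c <- L k] | k <- s]).
Proof.
elim: s => [|k s IH] //= /andP[ks us] UL.
rewrite cat_uniq IH // andbT map_inj_uniq ?UL //; last by move=> x y [].
apply/hasPn => x /flattenP [ys /mapP [j js ->] /mapP [c _ ->]].
by apply/mapP => -[c' _ [ejk _]]; move: ks; rewrite -ejk js.
Qed.

(** * Compositions *)

Lemma mem_compsf f n s : (n <= f)%N ->
  (s \in compsf f n) = is_comp s && (sumn s == n).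
Proof.
elim: f n s => [|f IH] n s.
  rewrite leqn0 => /eqP -> /=; rewrite inE.
  by case: s => [|[|x] s] //=; rewrite addSn andbF.
move=> le /=; case: (eqVneq n 0) => [->|n0].
  by rewrite inE; case: s => [|[|x] s] //=; rewrite addSn andbF.
apply/flattenP/idP.
  move=> [ys /mapP[k kin ->] /mapP[c cin ->]].
  move: kin; rewrite mem_iota => /andP[k1 kn].
  move: cin; rewrite IH; last by lia.
  rewrite /is_comp /= => /andP[-> /eqP sc]; rewrite k1 /=; apply/eqP; lia.
case: s => [|x c]; first by rewrite /= eq_sym (negPf n0).
rewrite /is_comp /= => /andP[/andP[x1 cc] /eqP sc].
exists [seq x :: c' | c' <- compsf f (n - x)].
  by apply/mapP; exists x => //; rewrite mem_iota; apply/andP; split; lia.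
apply/mapP; exists c => //; rewrite IH; last by lia.
by rewrite /is_comp cc /=; apply/eqP; lia.
Qed.

Lemma mem_comps n s : (s \in comps n) = is_comp s && (sumn s == n).
Proof. exact: mem_compsf. Qed.

Lemma uniq_comps n : uniq (comps n).
Proof.
suff uniq_compsf f m : uniq (compsf f m) by exact: uniq_compsf.
elim: f m => [|f IH] m /=; first by case: ifP.
by case: ifP => // _; apply: uniq_flatten_cons => //; exact: iota_uniq.
Qed.

Lemma comp_size_le_sumn s : is_comp s -> (size s <= sumn s)%N.
Proof.
elim: s => [|x s IH] //=; rewrite /is_comp /= => /andP[x0 cs].
by have := IH cs; lia.
Qed.

Lemma comps_part_lt m g k : g \in comps m -> g != [:: m] -> k \in g -> (k < m)%N.
Proof.
rewrite mem_comps => /andP[cg /eqP sg] gm kg.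
case/splitPr: kg cg sg gm => u w.
rewrite /is_comp all_cat /= sumn_cat /= => /and3P[cu _ cw] sg gm.
have := comp_size_le_sumn cu; have := comp_size_le_sumn cw.
case: u cu sg gm => [|y u] _; case: w cw => [|z w] _ //=; try lia.
by rewrite add0n addn0 => ->; rewrite eqxx.
Qed.

Definition comps_upto d := flatten [seq comps m | m <- iota 0 d.+1].

Lemma mem_comps_upto d s : (s \in comps_upto d) = is_comp s && (sumn s <= d)%N.
Proof.
apply/flattenP/andP => [[_ /mapP[m m_d ->]]|[cs sd]].
  by rewrite mem_comps => /andP[-> /eqP ->]; move: m_d; rewrite mem_iota.
exists (comps (sumn s)); last by rewrite mem_comps cs eqxx.
by apply/mapP; exists (sumn s); rewrite // mem_iota add0n ltnS.
Qed.

(** * Spans in an algebra of coefficient functions *)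

(* NSym and Sym are both modelled by coefficient functions T -> R with a
   bilinear product, so the span argument is carried out once for both. *)
Record mul_laws (R : fieldType) (T : Type)
    (mul : (T -> R) -> (T -> R) -> T -> R) (one : T -> R) : Prop := MulLaws {
  eq_mul_law : forall f f' g g', f =1 f' -> g =1 g' -> mul f g =1 mul f' g';
  mulA_law : forall f g h, mul (mul f g) h =1 mul f (mul g h);
  mul1f_law : forall f, mul one f =1 f;
  mulf1_law : forall f, mul f one =1 f;
  mul_suml_law : forall (I : Type) (s : seq I) (c : I -> R) F g,
    mul (fun x => \sum_(i <- s) c i * F i x) g =1
    (fun x => \sum_(i <- s) c i * mul (F i) g x);
  mul_sumr_law : forall (I : Type) (s : seq I) (c : I -> R) F g,
    mul g (fun x => \sum_(i <- s) c i * F i x) =1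
    (fun x => \sum_(i <- s) c i * mul g (F i) x) }.

Section Span.
Variables (R : fieldType) (T : Type).
Variables (mul : (T -> R) -> (T -> R) -> T -> R) (one : T -> R).
Hypothesis laws : mul_laws mul one.

Definition gprod (fs : seq (T -> R)) := foldr mul one fs.

Lemma gprod_cat s t : gprod (s ++ t) =1 mul (gprod s) (gprod t).
Proof.
elim: s => [|f s IH] /= x; first by rewrite (mul1f_law laws).
by rewrite (eq_mul_law laws (frefl f) IH) (mulA_law laws).
Qed.

Variable G : nat -> T -> R.

Definition spanned (f : T -> R) := exists L : seq (R * seq nat),
  forall x, f x = \sum_(p <- L) p.1 * gprod (map G p.2) x.

Lemma eq_spanned f g : f =1 g -> spanned f -> spanned g.
Proof. by move=> fg [L HL]; exists L => x; rewrite -fg. Qed.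

Lemma spanned0 : spanned (fun _ => 0).
Proof. by exists [::] => x; rewrite big_nil. Qed.

Lemma spanned_gprod s : spanned (gprod (map G s)).
Proof. by exists [:: (1, s)] => x; rewrite big_seq1 mul1r. Qed.

Lemma spanned_gen n : spanned (G n).
Proof. exact: eq_spanned (mulf1_law laws (G n)) (spanned_gprod [:: n]). Qed.

Lemma spanned_scale (c : R) f : spanned f -> spanned (fun x => c * f x).
Proof.
move=> [L HL]; exists [seq (c * p.1, p.2) | p <- L] => x.
by rewrite big_map HL mulr_sumr; apply: eq_bigr => p _; rewrite mulrA.
Qed.

Lemma spanned_add f g : spanned f -> spanned g -> spanned (fun x => f x + g x).
Proof. by move=> [L1 H1] [L2 H2]; exists (L1 ++ L2) => x; rewrite big_cat H1 H2. Qed.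

Lemma spanned_sub f g : spanned f -> spanned g -> spanned (fun x => f x - g x).
Proof.
move=> Sf /(spanned_scale (-1)) Sg.
by apply: eq_spanned _ (spanned_add Sf Sg) => x; rewrite mulN1r.
Qed.

Lemma spanned_sum (I : eqType) (s : seq I) (P : pred I) (F : I -> T -> R) :
  (forall i, i \in s -> P i -> spanned (F i)) ->
  spanned (fun x => \sum_(i <- s | P i) F i x).
Proof.
elim: s => [|i s IH] SF; first by apply: eq_spanned _ spanned0 => x; rewrite big_nil.
have {}IH : spanned (fun x => \sum_(j <- s | P j) F j x).
  by apply: IH => j js; apply: SF; rewrite in_cons js orbT.
case: (boolP (P i)) => Pi.
  apply: eq_spanned _ (spanned_add (SF i (mem_head _ _) Pi) IH) => x.
  by rewrite big_cons Pi.
by apply: eq_spanned _ IH => x; rewrite big_cons (negPf Pi).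
Qed.

Lemma spanned_mul f g : spanned f -> spanned g -> spanned (mul f g).
Proof.
move=> [L1 H1] [L2 H2].
have E : mul f g =1 (fun x => \sum_(p <- L1) p.1 *
           \sum_(r <- L2) r.1 * gprod (map G (p.2 ++ r.2)) x).
  move=> x; rewrite (eq_mul_law laws H1 H2) (mul_suml_law laws); apply: eq_bigr => p _.
  rewrite (mul_sumr_law laws); congr (_ * _); apply: eq_bigr => r _.
  by rewrite map_cat gprod_cat.
apply: eq_spanned (fsym E) _; apply: spanned_sum => p _ _; apply: spanned_scale.
by apply: spanned_sum => r _ _; apply: spanned_scale; exact: spanned_gprod.
Qed.

Lemma spanned_gprod_map (X : nat -> T -> R) s :
  (forall k, k \in s -> spanned (X k)) -> spanned (gprod (map X s)).
Proof.
elim: s => [|k s IH] SX /=; first exact: (spanned_gprod [::]).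
apply: spanned_mul; first by apply: SX; rewrite mem_head.
by apply: IH => j js; apply: SX; rewrite in_cons js orbT.
Qed.

Section Triangular.
Variables (X : nat -> T -> R) (c : nat -> seq nat -> R).
Hypothesis G_expand : forall n, (0 < n)%N ->
  G n =1 (fun x => \sum_(g <- comps n) c n g * gprod (map X g) x).
Hypothesis c_diag_neq0 : forall n, (0 < n)%N -> c n [:: n] != 0.

(* X n is the only term of G n that is not a product of X k with k < n. *)
Lemma spanned_triangular m : (0 < m)%N -> spanned (X m).
Proof.
elim/ltn_ind: m => m IH m_gt0.
have m_comp : [:: m] \in comps m.
  by rewrite mem_comps /is_comp /= m_gt0 addn0 eqxx.
pose S x := \sum_(g <- comps m | g != [:: m]) c m g * gprod (map X g) x.
have E : X m =1 (fun x => (c m [:: m])^-1 * (G m x - S x)).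
  move=> x; rewrite G_expand // (bigD1_seq [:: m]) ?uniq_comps //=.
  by rewrite addrK (mulf1_law laws) mulKf ?c_diag_neq0.
apply: eq_spanned (fsym E) _; apply: spanned_scale.
apply: spanned_sub; first exact: spanned_gen.
apply: spanned_sum => g gm g_neq; apply: spanned_scale.
apply: spanned_gprod_map => k kg; apply: IH; first exact: comps_part_lt gm g_neq kg.
by move: gm; rewrite mem_comps => /andP[/allP/(_ k kg)].
Qed.

Lemma spanned_triangular_gprod s : is_comp s -> spanned (gprod (map X s)).
Proof. by move=> /allP cs; apply: spanned_gprod_map => k /cs; exact: spanned_triangular. Qed.

End Triangular.
End Span.

Arguments spanned0 {R T mul one G}.

(** * Noncommutative symmetric functions *)

Lemma eq_nmul f f' g g' : f =1 f' -> g =1 g' -> nmul f g =1 nmul f' g'.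
Proof. by move=> ff gg x; apply: eq_bigr => i _; rewrite ff gg. Qed.

Lemma nmul_suml (I : Type) (s : seq I) (c : I -> C) F g :
  nmul (fun x => \sum_(i <- s) c i * F i x) g =1
  (fun x => \sum_(i <- s) c i * nmul (F i) g x).
Proof.
move=> x; rewrite /nmul; under eq_bigr do rewrite mulr_suml.
rewrite exchange_big; apply: eq_bigr => i _.
by rewrite mulr_sumr; apply: eq_bigr => j _; rewrite mulrA.
Qed.

Lemma nmul_sumr (I : Type) (s : seq I) (c : I -> C) F g :
  nmul g (fun x => \sum_(i <- s) c i * F i x) =1
  (fun x => \sum_(i <- s) c i * nmul g (F i) x).
Proof.
move=> x; rewrite /nmul; under eq_bigr do rewrite mulr_sumr.
rewrite exchange_big; apply: eq_bigr => i _.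
by rewrite mulr_sumr; apply: eq_bigr => j _; rewrite mulrCA.
Qed.

Lemma nmul_nil f g : nmul f g [::] = f [::] * g [::].
Proof. exact: big_ord1. Qed.

Lemma nmul_cons f g x t :
  nmul f g (x :: t) = f [::] * g (x :: t) + nmul (fun s => f (x :: s)) g t.
Proof. by rewrite /nmul big_ord_recl. Qed.

Lemma nmul1f f : nmul none f =1 f.
Proof.
move=> x; rewrite /nmul big_ord_recl take0 drop0 /none eqxx mul1r big1 ?addr0 //.
move=> i _; have : size (take (bump 0 i) x) = bump 0 i by rewrite size_takel.
by case: (take _ x) => [|? ?] //= _; rewrite mul0r.
Qed.

Lemma nmulf1 f : nmul f none =1 f.
Proof.
move=> x; rewrite /nmul big_ord_recr /= take_size drop_size /none eqxx mulr1.
rewrite big1 ?add0r // => i _.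
have : size (drop i x) != 0%N by rewrite size_drop subn_eq0 -ltnNge.
by case: (drop _ x) => [|? ?] //= _; rewrite mulr0.
Qed.

Lemma nmulDl (c : C) f1 f2 g t :
  nmul (fun s => c * f1 s + f2 s) g t = c * nmul f1 g t + nmul f2 g t.
Proof.
rewrite /nmul mulr_sumr -big_split; apply: eq_bigr => i _.
by rewrite mulrDl mulrA.
Qed.

Lemma nmulA f g h : nmul (nmul f g) h =1 nmul f (nmul g h).
Proof.
move=> beta; elim: beta f => [|x t IH] f; first by rewrite !nmul_nil mulrA.
rewrite !nmul_cons !nmul_nil (eq_nmul (nmul_cons f g x) (frefl h)) nmulDl IH.
by rewrite mulrDr !mulrA addrA.
Qed.

Lemma nmul_Hn k f beta :
  nmul (Hn k) f beta = if beta is x :: t then (x == k)%:R * f t else 0.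
Proof.
case: beta => [|x t]; first by rewrite nmul_nil mul0r.
rewrite nmul_cons /Hn mul0r add0r /nmul big_ord_recl take0 drop0 /=.
rewrite eqseq_cons andbT big1 ?addr0 // => i _.
have : size (take (bump 0 i) t) = bump 0 i by rewrite size_takel.
by case: (take _ t) => [|? ?] //= _; rewrite eqseq_cons andbF mul0r.
Qed.

Lemma nprod_Hn s beta : nprod (map Hn s) beta = (beta == s)%:R.
Proof.
elim: s beta => [|k s IH] [|x t] //=; rewrite nmul_Hn // IH.
by rewrite eqseq_cons -natrM mulnb.
Qed.

Definition nmul_laws : mul_laws nmul none :=
  MulLaws eq_nmul nmulA nmul1f nmulf1 nmul_suml nmul_sumr.

Definition Bhat_coef (a b : C) n (g : seq nat) := a ^+ (n - size g) * b ^+ (size g).-1.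

Lemma Bhat_coef_diag_neq0 (a b : C) n : a != 0 -> Bhat_coef a b n [:: n] != 0.
Proof. by move=> a0; rewrite /Bhat_coef mulr1 expf_neq0. Qed.

Lemma Bhat_expand (a b : C) n : (0 < n)%N ->
  Bhat a b n =1 (fun beta => \sum_(g <- comps n) Bhat_coef a b n g * nprod (map Hn g) beta).
Proof.
move=> n_gt0 beta; rewrite /Bhat eqn0Ngt n_gt0 /=.
under eq_bigr do rewrite nprod_Hn.
by rewrite sum_mulr_eq_natr ?uniq_comps.
Qed.

Lemma NSym_spanned_Bhat (a b : C) f : a != 0 -> in_NSym f -> spanned nmul none (Bhat a b) f.
Proof.
move=> a_neq0 [d Hd].
have Ef : f =1 (fun beta => \sum_(g <- undup (comps_upto d)) f g * nprod (map Hn g) beta).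
  move=> beta; under eq_bigr do rewrite nprod_Hn.
  rewrite sum_mulr_eq_natr ?undup_uniq // mem_undup mem_comps_upto.
  by case: (eqVneq (f beta) 0) => [-> | /Hd [-> ->]]; first by case: ifP.
apply: eq_spanned (fsym Ef) _; apply: spanned_sum => g.
rewrite mem_undup mem_comps_upto => /andP[g_comp _] _; apply: spanned_scale.
apply: (spanned_triangular_gprod nmul_laws (Bhat_expand a b)) g_comp.
by move=> n _; exact: Bhat_coef_diag_neq0.
Qed.

(** * Symmetric functions *)

Lemma big_below_cons (R : nmodType) a t (F : seq nat -> R) :
  \sum_(be <- below (a :: t)) F be =
  \sum_(k <- iota 0 a.+1) \sum_(s <- below t) F (k :: s).
Proof. by rewrite big_flatten big_map; apply: eq_bigr => k _; rewrite big_map. Qed.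

Lemma mem_below_cons a t be :
  (be \in below (a :: t)) = if be is k :: s then (k <= a)%N && (s \in below t) else false.
Proof.
apply/flattenP/idP => [[_ /mapP[k + ->] /mapP[s s_t ->]]|].
  by rewrite mem_iota ltnS => /= ->.
case: be => [|k s] // /andP[ka s_t]; exists [seq k :: s' | s' <- below t].
  by apply/mapP; exists k; rewrite // mem_iota ltnS.
by apply/mapP; exists s.
Qed.

Lemma uniq_below al : uniq (below al).
Proof. by elim: al => [|a t IH] //; apply: uniq_flatten_cons; rewrite ?iota_uniq. Qed.

Lemma below_refl al : al \in below al.
Proof. by elim: al => [|a t IH]; rewrite ?inE // mem_below_cons leqnn. Qed.

Lemma below_zero al : nseq (size al) 0%N \in below al.
Proof. by elim: al => [|a t IH]; rewrite ?inE // mem_below_cons. Qed.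

Lemma subvv al : subv al al = nseq (size al) 0%N.
Proof. by elim: al => [|a t IH] //=; rewrite subnn IH. Qed.

Lemma subv0 al : subv al (nseq (size al) 0%N) = al.
Proof. by elim: al => [|a t IH] //=; rewrite subn0 IH. Qed.

Lemma sumn_subv al be : be \in below al -> (sumn (subv al be) + sumn be)%N = sumn al.
Proof.
elim: al be => [|a t IH] [|k s] //; rewrite ?inE // mem_below_cons //.
by move=> /andP[ka /IH] /=; lia.
Qed.

Lemma below_sumn0 al be : be \in below al -> sumn be = 0%N -> be = nseq (size al) 0%N.
Proof.
elim: al be => [|a t IH] [|k s] //; rewrite ?inE // mem_below_cons //=.
by move=> /andP[_ /IH {}IH] /eqP; rewrite addn_eq0 => /andP[/eqP-> /eqP/IH->].
Qed.

Lemma below_sumn_subv0 al be : be \in below al -> sumn (subv al be) = 0%N -> be = al.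
Proof.
elim: al be => [|a t IH] [|k s] //; rewrite ?inE // mem_below_cons //=.
move=> /andP[ka /IH {}IH] /eqP; rewrite addn_eq0 subn_eq0 => /andP[ak /eqP/IH->].
by have -> : k = a by apply/eqP; rewrite eqn_leq ka.
Qed.

Lemma below_nseq0 n : below (nseq n 0%N) = [:: nseq n 0%N].
Proof. by elim: n => [|n IH] //=; rewrite IH. Qed.

Lemma eq_smul f f' g g' : f =1 f' -> g =1 g' -> smul f g =1 smul f' g'.
Proof. by move=> ff gg x; apply: eq_bigr => i _; rewrite ff gg. Qed.

Lemma smul_suml (I : Type) (s : seq I) (c : I -> C) F g :
  smul (fun x => \sum_(i <- s) c i * F i x) g =1
  (fun x => \sum_(i <- s) c i * smul (F i) g x).
Proof.
move=> x; rewrite /smul; under eq_bigr do rewrite mulr_suml.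
rewrite exchange_big; apply: eq_bigr => i _.
by rewrite mulr_sumr; apply: eq_bigr => j _; rewrite mulrA.
Qed.

Lemma smul_sumr (I : Type) (s : seq I) (c : I -> C) F g :
  smul g (fun x => \sum_(i <- s) c i * F i x) =1
  (fun x => \sum_(i <- s) c i * smul g (F i) x).
Proof.
move=> x; rewrite /smul; under eq_bigr do rewrite mulr_sumr.
rewrite exchange_big; apply: eq_bigr => i _.
by rewrite mulr_sumr; apply: eq_bigr => j _; rewrite mulrCA.
Qed.

Lemma smul1f f : smul sone f =1 f.
Proof.
move=> al; rewrite /smul /sone (sum_natr_pred_unique _ (uniq_below al) (below_zero al)).
- by rewrite subv0.
- by rewrite sumn_nseq.
- by move=> be be_al /eqP; exact: below_sumn0.
Qed.

Lemma smulf1 f : smul f sone =1 f.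
Proof.
move=> al; rewrite /smul /sone; under eq_bigr do rewrite mulrC.
rewrite (sum_natr_pred_unique _ (uniq_below al) (below_refl al)) //.
  by rewrite subvv sumn_nseq.
by move=> be be_al /eqP; exact: below_sumn_subv0.
Qed.

Lemma sum_below_assoc (R : nmodType) al (F : seq nat -> seq nat -> seq nat -> R) :
  \sum_(be <- below al) \sum_(ga <- below be) F ga (subv be ga) (subv al be) =
  \sum_(ga <- below al) \sum_(de <- below (subv al ga)) F ga de (subv (subv al ga) de).
Proof.
elim: al F => [|a t IH] F; first by rewrite /= !big_seq1.
pose H k' m r := \sum_(s' <- below t) \sum_(de <- below (subv t s'))
                   F (k' :: s') (m :: de) (r :: subv (subv t s') de).
transitivity (\sum_(k <- iota 0 a.+1) \sum_(k' <- iota 0 k.+1) H k' (k - k')%N (a - k)%N).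
  rewrite big_below_cons; apply: eq_bigr => k _.
  under eq_bigr do rewrite big_below_cons.
  rewrite /= exchange_big; apply: eq_bigr => k' _.
  exact: (IH (fun x y z => F (k' :: x) ((k - k') :: y)%N ((a - k) :: z)%N)).
transitivity (\sum_(k' <- iota 0 a.+1) \sum_(m <- iota 0 (a - k').+1) H k' m (a - k' - m)%N).
  rewrite -(sum_iota_triangle (fun j m => H j m (a - j - m)%N)).
  apply: eq_big_seq => k; rewrite mem_iota => /andP[_ ka].
  by apply: eq_big_seq => k'; rewrite mem_iota => /andP[_ kk]; congr H; lia.
rewrite big_below_cons; apply: eq_bigr => k' _.
by rewrite /H exchange_big /=; apply: eq_bigr => s' _; rewrite big_below_cons.
Qed.

Lemma smulA f g h : smul (smul f g) h =1 smul f (smul g h).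
Proof.
move=> al; rewrite /smul; under eq_bigr do rewrite mulr_suml.
rewrite (sum_below_assoc al (fun x y z => f x * g y * h z)).
by apply: eq_bigr => ga _; rewrite mulr_sumr; apply: eq_bigr => de _; rewrite mulrA.
Qed.

Definition smul_laws : mul_laws smul sone :=
  MulLaws eq_smul smulA smul1f smulf1 smul_suml smul_sumr.

Definition nonzeros (s : seq nat) : seq nat := [seq x <- s | x != 0%N].

Lemma size_nonzeros s : (size (nonzeros s) <= size s)%N.
Proof. by rewrite size_filter count_size. Qed.

Lemma size_nonzeros_eq0 s : (size (nonzeros s) == 0%N) = (sumn s == 0%N).
Proof.
elim: s => [|x s IH] //=; case: (eqVneq x 0%N) => [->|] //=.
by rewrite addn_eq0 => /negPf ->.
Qed.

Lemma size_nonzeros_cons x s :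
  size (nonzeros (x :: s)) = ((x != 0%N) + size (nonzeros s))%N.
Proof. by rewrite /nonzeros /=; case: (x != 0%N). Qed.

Lemma sumn_nonzeros s : sumn (nonzeros s) = sumn s.
Proof. by elim: s => [|x s IH] //=; case: eqP => [->|_] //=; rewrite IH. Qed.

Lemma perm_nonzeros s n :
  perm_eq (s ++ nseq n 0%N) (nonzeros s ++ nseq (size s - size (nonzeros s) + n) 0%N).
Proof.
rewrite nseqD catA perm_cat2r -(perm_filterC (fun x => x != 0%N) s).
rewrite perm_cat2l; set z := filter _ s.
have -> : z = nseq (size z) 0%N.
  by apply/all_pred1P/allP => x; rewrite mem_filter /= negbK => /andP[].
by rewrite !size_filter -(count_predC (fun x => x != 0%N) s) addKn.
Qed.

Lemma same_nonzeroE al al' : same_nonzero al al' = perm_eq (nonzeros al) (nonzeros al').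
Proof.
apply/idP/idP => [|P].
  by move/(perm_filter (fun x => x != 0%N)); rewrite !filter_cat !filter_nseq /= !cats0.
rewrite /same_nonzero (permPl (perm_nonzeros _ _)) (permPr (perm_nonzeros _ _)).
have -> : (size al - size (nonzeros al) + size al' =
           size al' - size (nonzeros al') + size al)%N.
  by rewrite !addnBAC ?size_nonzeros // (perm_size P) addnC.
by rewrite perm_cat ?perm_refl.
Qed.

Definition is_symmetric (f : sfun) := forall al al', same_nonzero al al' -> f al = f al'.

Lemma symmetric_pad f x n : is_symmetric f -> f (x ++ nseq n 0%N) = f x.
Proof.
by move=> Sf; apply: Sf; rewrite same_nonzeroE /nonzeros filter_cat filter_nseq cats0.
Qed.

Lemma symmetric_perm f x y : is_symmetric f -> perm_eq x y -> f x = f y.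
Proof. by move=> Sf xy; apply: Sf; rewrite same_nonzeroE perm_filter. Qed.

Lemma is_symmetric_pad_perm f : (forall x n, f (x ++ nseq n 0%N) = f x) ->
  (forall x y, perm_eq x y -> f x = f y) -> is_symmetric f.
Proof.
move=> f_pad f_perm x y; rewrite same_nonzeroE => P.
have E z : f z = f (nonzeros z ++ nseq (size z - size (nonzeros z) + 0) 0%N).
  by rewrite -(f_perm _ _ (perm_nonzeros z 0)) f_pad.
by rewrite E (E y) !f_pad; exact: f_perm.
Qed.

Lemma is_symmetric_nonzeros f :
  (forall x y, perm_eq (nonzeros x) (nonzeros y) -> f x = f y) -> is_symmetric f.
Proof. by move=> Hf x y; rewrite same_nonzeroE; exact: Hf. Qed.

Fixpoint swap_at (i : nat) (s : seq nat) : seq nat :=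
  match i, s with
  | 0, x :: y :: t => y :: x :: t
  | i'.+1, x :: t => x :: swap_at i' t
  | _, _ => s
  end.

Lemma perm_swap_at i s : perm_eq (swap_at i s) s.
Proof.
elim: i s => [|i IH] [|x [|y t]] //=; rewrite ?perm_cons ?IH //.
exact: (permEl (perm_catCA [:: y] [:: x] t)).
Qed.

Lemma swap_invariant_move_front (T : Type) (P : seq nat -> T) s1 x s2 :
  (forall i u, P (swap_at i u) = P u) -> P (s1 ++ x :: s2) = P (x :: s1 ++ s2).
Proof.
elim: s1 P => [|y s1 IH] P P_swap //=.
rewrite (IH (fun u => P (y :: u))) => [|i u]; last exact: (P_swap i.+1 (y :: u)).
exact: (P_swap 0%N [:: x, y & s1 ++ s2]).
Qed.

Lemma swap_invariant_perm (T : Type) (P : seq nat -> T) s t :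
  (forall i u, P (swap_at i u) = P u) -> perm_eq s t -> P s = P t.
Proof.
elim: s P t => [|x s IH] P t P_swap; first by move/perm_size; case: t.
move=> st; have xt : x \in t by rewrite -(perm_mem st) mem_head.
case/splitPr: xt st => t1 t2 st; rewrite swap_invariant_move_front //.
apply: (IH (fun u => P (x :: u))) => [i u|]; first exact: (P_swap i.+1 (x :: u)).
by rewrite -(perm_cons x) (perm_trans st) // (permEl (perm_catCA t1 [:: x] t2)).
Qed.

Lemma sum_below_swap_at (R : nmodType) i al (F : seq nat -> seq nat -> R) :
  \sum_(be <- below (swap_at i al)) F be (subv (swap_at i al) be) =
  \sum_(be <- below al) F (swap_at i be) (swap_at i (subv al be)).
Proof.
elim: i al F => [|i IH] [|x t] F; rewrite ?big_seq1 //.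
  case: t => [|y t].
    by rewrite !big_below_cons; apply: eq_bigr => k _; rewrite !big_seq1.
  rewrite [swap_at 0 _]/= !big_below_cons; under eq_bigr do rewrite big_below_cons.
  under [RHS]eq_bigr do rewrite big_below_cons.
  by rewrite exchange_big.
rewrite [swap_at i.+1 _]/= !big_below_cons; apply: eq_bigr => k _.
exact: (IH t (fun u v => F (k :: u) ((x - k) :: v)%N)).
Qed.

Lemma sum_below_pad (R : nmodType) x n (F : seq nat -> seq nat -> R) :
  \sum_(be <- below (x ++ nseq n 0%N)) F be (subv (x ++ nseq n 0%N) be) =
  \sum_(be <- below x) F (be ++ nseq n 0%N) (subv x be ++ nseq n 0%N).
Proof.
elim: x F => [|a t IH] F.
  by rewrite cat0s below_nseq0 !big_seq1 /= subvv size_nseq.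
rewrite cat_cons !big_below_cons; apply: eq_bigr => k _.
exact: (IH (fun u v => F (k :: u) ((a - k) :: v)%N)).
Qed.

Lemma smul_symmetric f g : is_symmetric f -> is_symmetric g -> is_symmetric (smul f g).
Proof.
move=> Sf Sg; apply: is_symmetric_pad_perm => [x n|x y].
  rewrite /smul (sum_below_pad x n (fun u v => f u * g v)).
  by apply: eq_bigr => be _; rewrite !symmetric_pad.
apply: (@swap_invariant_perm _ (smul f g)) => i u; rewrite /smul.
rewrite (sum_below_swap_at i u (fun u v => f u * g v)).
by apply: eq_bigr => be _; rewrite !(symmetric_perm _ (perm_swap_at i _)).
Qed.

Definition homogeneous (f : sfun) m := forall al, f al != 0 -> sumn al = m.

Lemma boolr_neq0 (b : bool) : (b%:R : C) != 0 -> b.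
Proof. by case: b; rewrite ?eqxx. Qed.

Lemma smul_neq0 f g al : smul f g al != 0 ->
  exists2 be, be \in below al & (f be != 0) && (g (subv al be) != 0).
Proof.
move=> nz; apply/hasP; apply: contraTT nz => /hasPn fg0.
rewrite negbK /smul big1_seq // => be /andP[_ /fg0].
by rewrite negb_and !negbK => /orP[] /eqP ->; rewrite ?mul0r ?mulr0.
Qed.

Lemma homogeneous_smul f g m n :
  homogeneous f m -> homogeneous g n -> homogeneous (smul f g) (m + n).
Proof.
move=> Hf Hg al /smul_neq0 [be be_al /andP[/Hf fbe /Hg gbe]].
by rewrite -(sumn_subv be_al) fbe gbe addnC.
Qed.

Lemma homogeneous_sprod (F : nat -> sfun) s :
  (forall k, homogeneous (F k) k) -> homogeneous (sprod (map F s)) (sumn s).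
Proof.
move=> HF; elim: s => [|k s IH] /=; last exact: homogeneous_smul.
by move=> al /boolr_neq0 /eqP.
Qed.

Lemma symmetric_sprod (F : nat -> sfun) s :
  (forall k, is_symmetric (F k)) -> is_symmetric (sprod (map F s)).
Proof.
move=> SF; elim: s => [|k s IH] /=; last exact: smul_symmetric.
by apply: is_symmetric_nonzeros => x y /perm_sumn; rewrite /sone !sumn_nonzeros => ->.
Qed.

Lemma homogeneous_hn n : homogeneous (hn n) n.
Proof. by move=> al /boolr_neq0 /eqP. Qed.

Definition hprod s := sprod (map hn s).

Lemma comm_Bhat_expand (a b : C) n : (0 < n)%N ->
  comm (Bhat a b n) =1 (fun al => \sum_(g <- comps n) Bhat_coef a b n g * hprod g al).
Proof.
move=> n_gt0 al; rewrite /comm /Bhat eqn0Ngt n_gt0 /=.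
have [<-|n_al] := eqVneq (sumn al) n; first by apply: eq_big_seq => g ->.
rewrite big1_seq => [|g /andP[_]]; last first.
  by rewrite !mem_comps => /andP[-> /eqP ->]; rewrite (negPf n_al) mul0r.
rewrite big1_seq // => g /andP[_]; rewrite mem_comps => /andP[_ /eqP sg].
have [->|] := eqVneq (hprod g al) 0; first by rewrite mulr0.
move/(homogeneous_sprod homogeneous_hn); rewrite sg => al_n.
by rewrite al_n eqxx in n_al.
Qed.

(** * Power sums *)

(* the power sum p_k = sum_i x_i^k *)
Definition psum k : sfun := fun al => ((size (nonzeros al) == 1%N) && (sumn al == k))%:R.

Lemma homogeneous_psum k : homogeneous (psum k) k.
Proof. by move=> al /boolr_neq0 /andP[_ /eqP]. Qed.

Lemma symmetric_psum k : is_symmetric (psum k).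
Proof.
apply: is_symmetric_nonzeros => x y P.
by rewrite /psum -(sumn_nonzeros x) -(sumn_nonzeros y) (perm_sumn P) (perm_size P).
Qed.

Lemma psum_cons i k s : (0 < k)%N -> psum i (k :: s) = (sumn s == 0%N)%:R * (i == k)%:R.
Proof.
rewrite /psum /= lt0n => /negPf k_neq0; rewrite k_neq0 eqSS size_nonzeros_eq0.
by case: (eqVneq (sumn s) 0%N) => [->|]; rewrite ?mul0r // addn0 eq_sym mul1r.
Qed.

Lemma sum_below_psum i al : (0 < i)%N ->
  \sum_(be <- below al) psum i be = (count (fun v => i <= v)%N al)%:R.
Proof.
move=> i_gt0; elim: al => [|a t IH]; first by rewrite big_seq1 /psum.
rewrite big_below_cons (_ : iota 0 a.+1 = 0%N :: iota 1 a) // big_cons.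
under [X in X + _]eq_bigr do rewrite [psum i _]/psum /= add0n -/(psum i _).
rewrite IH (eq_big_seq (fun k => (i == k)%:R)) => [|k]; last first.
  rewrite mem_iota => /andP[k_gt0 _]; under eq_bigr do rewrite psum_cons //.
  rewrite (sum_natr_pred_unique _ (uniq_below t) (below_zero t)) ?sumn_nseq //.
  by move=> s s_t /eqP; exact: below_sumn0.
have -> : \sum_(k <- iota 1 a) (i == k)%:R = (i <= a)%N%:R :> C.
  rewrite (eq_bigr (fun k => 1 * (i == k)%:R)) => [|k _]; last by rewrite mul1r.
  by rewrite sum_mulr_eq_natr ?iota_uniq // mem_iota i_gt0 add1n ltnS; case: (i <= a)%N.
by rewrite /= natrD addrC.
Qed.

Lemma sum_count_leq al k : (forall v, v \in al -> v <= k)%N ->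
  (\sum_(1 <= i < k.+1) count (fun v => i <= v) al)%N = sumn al.
Proof.
have sum_leq v : (\sum_(1 <= i < k.+1) (i <= v) = minn v k)%N.
  elim: k => [|k IH]; first by rewrite big_geq.
  by rewrite big_nat_recr //= IH; case: leqP => /=; lia.
elim: al => [|v al IH] al_k /=; first by rewrite big1.
rewrite big_split /= sum_leq IH => [|w w_al]; last by apply: al_k; rewrite in_cons w_al orbT.
by have := al_k v (mem_head _ _); lia.
Qed.

Lemma leq_sumn_mem v s : v \in s -> (v <= sumn s)%N.
Proof. by elim: s => [|x s IH] //=; rewrite in_cons => /orP[/eqP->|/IH]; lia. Qed.

Lemma newton_identity k al : (0 < k)%N ->
  \sum_(1 <= i < k.+1) smul (psum i) (hn (k - i)) al = k%:R * hn k al.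
Proof.
move=> k_gt0.
have E i : (1 <= i < k.+1)%N ->
    smul (psum i) (hn (k - i)) al = (sumn al == k)%:R * (count (fun v => i <= v)%N al)%:R.
  move=> /andP[i_gt0 i_k]; rewrite /smul -sum_below_psum // mulr_sumr.
  apply: eq_big_seq => be be_al.
  have [->|/homogeneous_psum sbe] := eqVneq (psum i be) 0; first by rewrite !mul0r mulr0.
  have := sumn_subv be_al; rewrite sbe /hn mulrC => sv.
  by rewrite (_ : (sumn (subv al be) == k - i)%N = (sumn al == k)) //; apply/eqP/eqP; lia.
rewrite (eq_big_nat _ _ E) -mulr_sumr -natr_sum /hn.
case: eqP => [al_k|_]; last by rewrite mul0r mulr0.
rewrite sum_count_leq ?al_k ?mulr1 ?mul1r // => v v_al.
by rewrite -al_k leq_sumn_mem.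
Qed.

Definition psum_prod (mu : seq nat) := sprod (map psum mu).

Lemma size_nonzeros_subv al be : be \in below al ->
  (size (nonzeros al) <= size (nonzeros be) + size (nonzeros (subv al be)))%N.
Proof.
elim: al be => [|a t IH] [|k s] //; rewrite ?inE // mem_below_cons //= => /andP[ka /IH].
have : ((a != 0%N) <= (k != 0%N) + (a - k != 0%N))%N.
  by case: a ka => [|a] //; case: k => [|k] //=; rewrite subSS; case: (a - k)%N.
by rewrite !size_nonzeros_cons; lia.
Qed.

Lemma perm_nonzeros_subv_psum be ga k : ga \in below be -> psum k ga != 0 ->
  (size (nonzeros (subv be ga)) < size (nonzeros be))%N ->
  perm_eq (nonzeros be) (k :: nonzeros (subv be ga)).
Proof.
move=> + /boolr_neq0 /andP[/eqP + /eqP <-].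
elim: be ga => [|b t IH] [|c s] //; rewrite ?inE // mem_below_cons // => /andP[cb s_t].
rewrite [subv _ _]/= !size_nonzeros_cons.
have [->|c_neq0] := eqVneq c 0%N.
  rewrite subn0 add0n => s1 lt_nz; have {}IH := IH s s_t s1; rewrite /= add0n.
  have [b0|b_neq0] := eqVneq b 0%N; first by move: lt_nz; rewrite b0 /= => /IH.
  apply: (@perm_trans _ (b :: sumn s :: nonzeros (subv t s))).
    by rewrite /nonzeros /= perm_cons IH // -(ltn_add2l (b != 0%N)).
  exact: (permEl (perm_catCA [:: b] [:: sumn s] _)).
move=> /eqP; rewrite /= add1n eqSS size_nonzeros_eq0 => /eqP s0.
rewrite (below_sumn0 s_t s0) subv0 /= sumn_nseq mul0n addn0.
have [bc|bc_neq0] := eqVneq (b - c)%N 0%N; last first.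
  by case: (b != 0%N); rewrite /= ?ltnn // add0n add1n ltnNge leqnSn.
have -> : b = c by apply/eqP; rewrite eqn_leq cb -subn_eq0 bc.
by rewrite subnn /= c_neq0 => _; rewrite perm_refl.
Qed.

Lemma symmetric_psum_prod mu : is_symmetric (psum_prod mu).
Proof. exact: symmetric_sprod symmetric_psum. Qed.

Lemma homogeneous_psum_prod mu : homogeneous (psum_prod mu) (sumn mu).
Proof. exact: homogeneous_sprod homogeneous_psum. Qed.

Lemma psum_prod_size_nonzeros (mu be : seq nat) :
  psum_prod mu be != 0 -> (size (nonzeros be) <= size mu)%N.
Proof.
elim: mu be => [|k mu IH] be /=.
  by move=> /boolr_neq0; rewrite -size_nonzeros_eq0 => /eqP ->.
move=> /smul_neq0 [ga ga_be /andP[/boolr_neq0 /andP[/eqP ga1 _] /IH le_mu]].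
by have := size_nonzeros_subv ga_be; rewrite ga1 add1n => /leq_trans; apply.
Qed.

Lemma psum_prod_perm (mu be : seq nat) : psum_prod mu be != 0 ->
  (size mu <= size (nonzeros be))%N -> perm_eq (nonzeros be) mu.
Proof.
elim: mu be => [|k mu IH] be /=.
  by move=> /boolr_neq0; rewrite -size_nonzeros_eq0 => /eqP/size0nil ->.
move=> /smul_neq0 [ga ga_be /andP[psum_ga prod_neq0]] mu_be.
have := psum_prod_size_nonzeros prod_neq0; have := size_nonzeros_subv ga_be.
move: (psum_ga) => /boolr_neq0 /andP[/eqP -> _] le1 le2.
apply: perm_trans (perm_nonzeros_subv_psum ga_be psum_ga _) _; first by lia.
by rewrite perm_cons IH //; lia.
Qed.

Lemma psum_prod_ge0 mu be : 0 <= psum_prod mu be.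
Proof.
elim: mu be => [|k mu IH] be /=; first exact: ler0n.
by apply: sumr_ge0 => ga _; apply: mulr_ge0; [exact: ler0n | exact: IH].
Qed.

Lemma psum_prod_diag_gt0 mu : is_comp mu -> 0 < psum_prod mu mu.
Proof.
elim: mu => [|k mu IH]; first by rewrite /= /sone ltr01.
case/andP => k_gt0 /IH mu_gt0.
have -> : psum_prod (k :: mu) = smul (psum k) (psum_prod mu) by [].
have F_ge0 ga : 0 <= psum k ga * psum_prod mu (subv (k :: mu) ga).
  by rewrite mulr_ge0 ?ler0n ?psum_prod_ge0.
rewrite lt0r sumr_ge0 // andbT psumr_neq0 //.
apply/hasP; exists (k :: nseq (size mu) 0%N); first by rewrite mem_below_cons leqnn below_zero.
rewrite /= subnn subv0 psum_cons // sumn_nseq mul0n !eqxx !mul1r.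
by rewrite (@symmetric_psum_prod mu (0%N :: mu) mu) // same_nonzeroE.
Qed.

(** * Monomial symmetric functions *)

Definition msym (mu : seq nat) : sfun := fun al => (same_nonzero mu al)%:R.

Definition partitions d := undup [seq sort leq s | s <- comps_upto d].

Lemma is_comp_nonzeros s : is_comp (nonzeros s).
Proof. by apply/allP => x; rewrite mem_filter lt0n => /andP[]. Qed.

Lemma nonzeros_comp s : is_comp s -> nonzeros s = s.
Proof. by move=> /allP s_comp; apply/all_filterP/allP => x /s_comp; rewrite lt0n. Qed.

Lemma is_comp_sort s : is_comp (sort leq s) = is_comp s.
Proof. exact: perm_all (permEl (perm_sort leq s)). Qed.

Lemma same_nonzero_sumn al al' : same_nonzero al al' -> sumn al = sumn al'.
Proof. by rewrite same_nonzeroE -sumn_nonzeros -(sumn_nonzeros al'); exact: perm_sumn. Qed.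

Lemma mem_partitions d nu :
  (nu \in partitions d) = [&& is_comp nu, sorted leq nu & (sumn nu <= d)%N].
Proof.
apply/idP/idP => [|/and3P[nu_comp nu_sorted nu_d]].
  rewrite mem_undup => /mapP[s]; rewrite mem_comps_upto => /andP[s_comp s_d] ->.
  rewrite (perm_sumn (permEl (perm_sort leq s))) s_d is_comp_sort s_comp andbT.
  exact: sort_sorted leq_total _.
rewrite mem_undup; apply/mapP; exists nu; last by rewrite sorted_sort //; exact: leq_trans.
by rewrite mem_comps_upto nu_comp.
Qed.

Lemma same_nonzero_sort be : same_nonzero (sort leq (nonzeros be)) be.
Proof.
rewrite same_nonzeroE nonzeros_comp ?is_comp_sort ?is_comp_nonzeros //.
exact: permEl (perm_sort leq _).
Qed.

Lemma partition_same_nonzero d nu be :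
  nu \in partitions d -> same_nonzero nu be -> nu = sort leq (nonzeros be).
Proof.
rewrite mem_partitions same_nonzeroE => /and3P[nu_comp nu_sorted _].
rewrite nonzeros_comp // => nu_be; apply: (sorted_eq leq_trans anti_leq nu_sorted).
  exact: sort_sorted leq_total _.
by rewrite perm_sym perm_sort perm_sym.
Qed.

Lemma msym_expand F d : is_symmetric F -> (forall be, F be != 0 -> (sumn be <= d)%N) ->
  F =1 (fun be => \sum_(nu <- partitions d) F nu * msym nu be).
Proof.
move=> F_sym F_deg be; rewrite /msym.
have [be_d|d_be] := leqP (sumn be) d.
  under eq_bigr do rewrite mulrC.
  rewrite (sum_natr_pred_unique (P := same_nonzero^~ be) _ (undup_uniq _) _
            (same_nonzero_sort be)).
  - by rewrite (F_sym _ _ (same_nonzero_sort be)).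
  - rewrite mem_partitions is_comp_sort is_comp_nonzeros sort_sorted ?leq_total //=.
    by rewrite (perm_sumn (permEl (perm_sort leq _))) sumn_nonzeros.
  - by move=> nu; apply: (@partition_same_nonzero d).
rewrite big1_seq => [|nu /andP[_]]; last first.
  rewrite mem_partitions => /and3P[_ _ nu_d].
  case: (boolP (same_nonzero nu be)) => [/same_nonzero_sumn nu_be|]; last by rewrite mulr0.
  by rewrite nu_be leqNgt d_be in nu_d.
by apply/eqP; apply: contraLR d_be => /F_deg; rewrite -leqNgt.
Qed.

Section SymSpan.
Variables (a b : C).
Hypothesis a_neq0 : a != 0.

Local Notation Bspanned := (spanned smul sone (fun n => comm (Bhat a b n))).

Lemma Sym_spanned_hn m : (0 < m)%N -> Bspanned (hn m).
Proof.
apply: (spanned_triangular smul_laws (comm_Bhat_expand a b)).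
by move=> n _; exact: Bhat_coef_diag_neq0.
Qed.

Lemma Sym_spanned_psum k : (0 < k)%N -> Bspanned (psum k).
Proof.
elim/ltn_ind: k => k IH k_gt0.
pose S al := \sum_(1 <= i < k) smul (psum i) (hn (k - i)) al.
have E : psum k =1 (fun al => k%:R * hn k al - S al).
  move=> al; rewrite -newton_identity // big_nat_recr //= subnn addrAC subrr add0r.
  by rewrite (eq_smul (frefl _) (_ : hn 0 =1 sone)) ?smulf1.
apply: eq_spanned (fsym E) _; apply: spanned_sub; first exact/spanned_scale/Sym_spanned_hn.
apply: spanned_sum => i; rewrite mem_index_iota => /andP[i_gt0 i_k] _.
by apply: (spanned_mul smul_laws); [exact: IH | apply: Sym_spanned_hn; rewrite subn_gt0].
Qed.

Lemma Sym_spanned_psum_prod mu : is_comp mu -> Bspanned (psum_prod mu).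
Proof.
move=> /allP mu_comp; apply: (spanned_gprod_map smul_laws) => k /mu_comp.
exact: Sym_spanned_psum.
Qed.

Lemma Sym_spanned_msym mu : is_comp mu -> sorted leq mu -> Bspanned (msym mu).
Proof.
have [n] := ubnP (size mu); elim: n mu => // n IH mu /ltnSE mu_n mu_comp mu_sorted.
have mu_part : mu \in partitions (sumn mu) by rewrite mem_partitions mu_comp mu_sorted /=.
have P_diag : psum_prod mu mu != 0 by rewrite lt0r_neq0 ?psum_prod_diag_gt0.
pose S be := \sum_(nu <- partitions (sumn mu) | nu != mu) psum_prod mu nu * msym nu be.
have E : msym mu =1 (fun be => (psum_prod mu mu)^-1 * (psum_prod mu be - S be)).
  move=> be; rewrite (@msym_expand _ (sumn mu) (symmetric_psum_prod mu) _ be); last first.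
    by move=> al /homogeneous_psum_prod ->.
  by rewrite (bigD1_seq mu) ?undup_uniq //= addrK mulKf.
apply: eq_spanned (fsym E) _; apply/spanned_scale/spanned_sub.
  exact: Sym_spanned_psum_prod.
apply: spanned_sum => nu; rewrite mem_partitions => /and3P[nu_comp nu_sorted _] nu_mu.
have [lt_nu|le_mu_nu] := ltnP (size nu) (size mu).
  by apply/spanned_scale/IH => //; exact: leq_trans lt_nu mu_n.
have [P0|/psum_prod_perm] := eqVneq (psum_prod mu nu) 0.
  by apply: eq_spanned _ spanned0 => be; rewrite P0 mul0r.
rewrite nonzeros_comp // => /(_ le_mu_nu) /(sorted_eq leq_trans anti_leq nu_sorted mu_sorted).
by move/eqP; rewrite (negPf nu_mu).
Qed.

Lemma Sym_spanned_comm_Bhat g : in_Sym g -> Bspanned g.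
Proof.
move=> [g_sym [d g_deg]]; apply: eq_spanned (fsym (msym_expand g_sym g_deg)) _.
apply: spanned_sum => nu; rewrite mem_partitions => /and3P[nu_comp nu_sorted _] _.
exact/spanned_scale/Sym_spanned_msym.
Qed.

End SymSpan.

Theorem corollary4p11 (a b : C) (ha : a != 0) :
  (* (a) the \hat B(a,b)_n generate NSym *)
  (forall f : nfun, in_NSym f ->
     exists L : seq (C * seq nat),
       forall beta, f beta =
         \sum_(p <- L) p.1 * nprod (map (Bhat a b) p.2) beta) /\
  (* (b) the comm(\hat B(a,b)_n) generate Sym *)
  (forall g : sfun, in_Sym g ->
     exists L : seq (C * seq nat),
       forall al, g al =
         \sum_(p <- L) p.1 * sprod (map (fun n => comm (Bhat a b n)) p.2) al).
Proof.
split => [f|g].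
  exact: (@NSym_spanned_Bhat a b f ha).
exact: (@Sym_spanned_comm_Bhat a b ha g).
Qed.
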